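(* Let $\gamma>0$, $c_u>0$, $c_a>0$, $c_s>0$ and $R^*=\log\left(\frac{c_u}{c_a}+1\right)$. Consider the optimization problem $$\min_{0\le s\le 1,\ T\ge 0}\ J_i(s,T):=\gamma(1-s)R^*+c_s\,(sR^*-T)$$ subject to: (IR-$u$) $T\le R^*$; (IC-$u$) $s\ge T/R^*$; (IR-$i$) $T-sR^*\ge 0$; (F-$i$) $s>1-\frac{1}{\gamma R^*}$. Then the optimal insurance policy is $s^*=1$, $T^*=R^*=\log\left(\frac{c_u}{c_a}+1\right)$.
   Context: $\log$ is the natural logarithm. $s$ is the coverage level and $T$ the subscription fee of an insurance policy; $c_s$ is a trade-off parameter of the insurer between the user's average effective loss and the insurer's profit. *)

From Stdlib Require Import Reals.
Open Scope R_scope.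

Definition Rstar (cu ca : R) : R := ln (cu / ca + 1).

Definition J (gamma cs Rs s T : R) : R :=
  gamma * (1 - s) * Rs + cs * (s * Rs - T).

Definition feasible (gamma Rs s T : R) : Prop :=
  0 <= s <= 1 /\ 0 <= T /\
  T <= Rs /\
  s >= T / Rs /\
  T - s * Rs >= 0 /\
  s > 1 - 1 / (gamma * Rs).

Definition is_unique_optimum (gamma cs Rs s0 T0 : R) : Prop :=
  feasible gamma Rs s0 T0 /\
  (forall s T, feasible gamma Rs s T ->
     J gamma cs Rs s0 T0 <= J gamma cs Rs s T) /\
  (forall s T, feasible gamma Rs s T ->
     J gamma cs Rs s T <= J gamma cs Rs s0 T0 -> s = s0 /\ T = T0).

(* The incentive constraint (IC-u) and the insurer's participation constraint
   (IR-i) together force the fee to be actuarially fair, T = s R*.  On that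
   line the insurer's profit term vanishes and J_i reduces to the user's
   residual loss gamma (1 - s) R*, which is nonnegative and zero only at full
   coverage s = 1. *)
From Stdlib Require Import Reals Lra.
Open Scope R_scope.

Lemma Rstar_gt0 (cu ca : R) : 0 < cu -> 0 < ca -> 0 < Rstar cu ca.
Proof.
  intros Hu Ha; unfold Rstar; rewrite <- ln_1.
  assert (0 < cu / ca) by (apply Rdiv_lt_0_compat; lra).
  apply ln_increasing; lra.
Qed.

Section Optimum.

Variables gamma cs Rs : R.
Hypothesis Hgamma : 0 < gamma.
Hypothesis HRs : 0 < Rs.

Lemma feasible_fee_eq (s T : R) : feasible gamma Rs s T -> T = s * Rs.
Proof.
  intros (_ & _ & _ & HIC & HIR & _).
  assert (T = T / Rs * Rs) by (field; lra).
  assert (T / Rs * Rs <= s * Rs) by (apply Rmult_le_compat_r; lra).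
  lra.
Qed.

Lemma J_feasible (s T : R) :
  feasible gamma Rs s T -> J gamma cs Rs s T = gamma * (1 - s) * Rs.
Proof.
  intros Hf; rewrite (feasible_fee_eq s T Hf); unfold J; ring.
Qed.

Lemma J_full_coverage : J gamma cs Rs 1 Rs = 0.
Proof. unfold J; ring. Qed.

Lemma feasible_full_coverage : feasible gamma Rs 1 Rs.
Proof.
  assert (0 < 1 / (gamma * Rs)) by (apply Rdiv_lt_0_compat; nra).
  assert (Rs / Rs = 1) by (field; lra).
  unfold feasible; lra.
Qed.

Lemma J_feasible_ge0 (s T : R) : feasible gamma Rs s T -> 0 <= J gamma cs Rs s T.
Proof.
  intros Hf; rewrite (J_feasible s T Hf).
  destruct Hf as (Hs & _).
  assert (0 <= gamma * (1 - s)) by (apply Rmult_le_pos; lra).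
  apply Rmult_le_pos; lra.
Qed.

Lemma J_feasible_le0_eq1 (s T : R) :
  feasible gamma Rs s T -> J gamma cs Rs s T <= 0 -> s = 1.
Proof.
  intros Hf HJ; rewrite (J_feasible s T Hf) in HJ.
  destruct Hf as (Hs & _).
  destruct (Req_dec s 1) as [|Hs1]; [assumption|].
  assert (0 < gamma * (1 - s) * Rs) by (repeat apply Rmult_lt_0_compat; lra).
  lra.
Qed.

End Optimum.

Theorem proposition4 (gamma cu ca cs : R) :
  0 < gamma -> 0 < cu -> 0 < ca -> 0 < cs ->
  is_unique_optimum gamma cs (Rstar cu ca) 1 (Rstar cu ca).
Proof.
  intros Hgamma Hu Ha _.
  pose proof (Rstar_gt0 cu ca Hu Ha) as HRs.
  split; [|split]; [now apply feasible_full_coverage| |];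
    intros s T Hf; rewrite J_full_coverage.
  - exact (J_feasible_ge0 _ cs _ Hgamma HRs s T Hf).
  - intros HJ.
    assert (s = 1) as -> by exact (J_feasible_le0_eq1 _ cs _ Hgamma HRs s T Hf HJ).
    split; [reflexivity|].
    rewrite (feasible_fee_eq _ _ HRs 1 T Hf); ring.
Qed.
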